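(* Let $K$ be a global field of positive characteristic, $\nu$ a place of $K$, $\mathbb{G}$ a $K$-group, $G=\mathbb{G}(K_\nu)$, $\Gamma$ a discrete subgroup (an arithmetic lattice commensurable with $\mathbb{G}(\mathcal{O}_{\{\nu\}})$), $\mathbb{F}$ a connected $K$-closed subgroup of $\mathbb{G}$ without $K$-rational characters, $F=\mathbb{F}(K_\nu)$ and $\Gamma_F=\Gamma\cap N_G(F)$. Let $D\subset G$ be compact and let $\mathcal{Y}$ be the set of $(F,\Gamma)$-self-intersection points of $D$. Then for every compact subset $D'\subset D\setminus\mathcal{Y}$ there is an open neighbourhood $\Omega$ of $D'$ in $G$ that has no $(F,\Gamma)$-self-intersection points, i.e. there are no $g\in\Omega$ and $\gamma\in\Gamma\setminus\Gamma_F$ with $g\gamma\in\Omega$.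
   Context: For $A\subset G$, a point $x\in A$ is an $(F,\Gamma)$-self-intersection point of $A$ if there exists $\gamma\in\Gamma\setminus\Gamma_F$ with $x\gamma\in A$. *)

From HB Require Import structures.
From mathcomp Require Import all_boot.
From mathcomp Require Import all_classical topology.

Set Implicit Arguments.
Unset Strict Implicit.
Unset Printing Implicit Defensive.

Local Open Scope classical_set_scope.
Local Open Scope group_scope.

HB.mixin Record isTopologicalGroup G of Group G & Topological G := {
  mul_continuous : continuous (fun p : G * G => p.1 * p.2);
  inv_continuous : continuous (fun x : G => x^-1)
}.

#[short(type="topGroupType")]
HB.structure Definition TopologicalGroup :=
  {G of isTopologicalGroup G & Group G & Topological G}.

Definition is_subgroup (G : groupType) (H : set G) : Prop :=
  H 1 /\ (forall x y, H x -> H y -> H (x * y)) /\ (forall x, H x -> H x^-1).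

Definition discrete_subset (T : topologicalType) (H : set T) : Prop :=
  forall h, H h -> exists U : set T, [/\ open U, U h & U `&` H = [set h]].

Definition normaliser (G : groupType) (F : set G) : set G :=
  [set g | forall x, F (g^-1 * x * g) <-> F x].

Definition Gamma_F (G : groupType) (F Gamma : set G) : set G :=
  Gamma `&` normaliser F.

Definition self_intersection_point (G : groupType) (F Gamma A : set G) (x : G)
  : Prop :=
  A x /\ exists2 gamma, (Gamma `\` Gamma_F F Gamma) gamma & A (x * gamma).

Definition self_intersection_points (G : groupType) (F Gamma A : set G)
  : set G := [set x | self_intersection_point F Gamma A x].

(** Write [Bad] for [Gamma \ Gamma_F]. For [a, b] in [D'] the quotient
    [a^-1 * b] is not in [Bad], since otherwise [a] would be a
    self-intersection point of [D]; as [Gamma] is a discrete subgroup of a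
    Hausdorff group, [Bad] then even stays away from a neighbourhood of
    [a^-1 * b]. The map [((a, b), (u, v)) |-> u^-1 * a^-1 * b * v] is
    continuous, so compactness of [D' x D'] yields a single neighbourhood [W]
    of [1] with [u^-1 * a^-1 * b * v] outside [Bad] for all [a, b] in [D'] and
    [u, v] in [W], and [Omega := D' * W] has no self-intersection points. *)
From HB Require Import structures.
From mathcomp Require Import all_boot.
From mathcomp Require Import all_classical topology.

Set Implicit Arguments.
Unset Strict Implicit.
Unset Printing Implicit Defensive.

Local Open Scope classical_set_scope.
Local Open Scope group_scope.

Section TopologicalGroup.
Variable G : topGroupType.

Lemma cvgM_group (T : Type) (F : set_system T) (FF : Filter F) (f g : T -> G)
    (a b : G) :
  f @ F --> a -> g @ F --> b -> (fun x => f x * g x) @ F --> a * b.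
Proof.
move=> fa gb.
apply: (@continuous2_cvg _ _ _ _ F FF f g (fun x y : G => x * y)) => //.
exact: (@mul_continuous G (a, b)).
Qed.

Lemma cvgV_group (T : Type) (F : set_system T) (FF : Filter F) (f : T -> G)
    (a : G) :
  f @ F --> a -> (fun x => (f x)^-1) @ F --> a^-1.
Proof. by move=> fa; apply: continuous_cvg => //; exact: inv_continuous. Qed.

Lemma nbhs_lmul (a x : G) (W : set G) :
  nbhs (a * x) W -> nbhs x [set y | W (a * y)].
Proof. by apply: cvgM_group; [exact: cvg_cst | exact: cvg_id]. Qed.

Definition conj_quotient (q : (G * G) * (G * G)) : G :=
  q.2.1^-1 * q.1.1^-1 * (q.1.2 * q.2.2).

Lemma conj_quotient_continuous : continuous conj_quotient.
Proof.
move=> q; rewrite /conj_quotient.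
apply: cvgM_group; [apply: cvgM_group | apply: cvgM_group];
  try apply: cvgV_group.
- by apply: (cvg_comp _ _ cvg_snd); exact: cvg_fst.
- by apply: (cvg_comp _ _ cvg_fst); exact: cvg_fst.
- by apply: (cvg_comp _ _ cvg_fst); exact: cvg_snd.
- by apply: (cvg_comp _ _ cvg_snd); exact: cvg_snd.
Qed.

Lemma conj_quotient_id (a b : G) : conj_quotient ((a, b), (1, 1)) = a^-1 * b.
Proof. by rewrite /conj_quotient /= invg1 mul1g mulg1. Qed.

Section DiscreteSubgroup.
Variable Gamma : set G.
Hypothesis Gamma_subgroup : is_subgroup Gamma.
Hypothesis Gamma_discrete : discrete_subset Gamma.

(* The neighbourhood comes from [x^-1 * z -> 1] as [(x, z) -> (c, c)]. *)
Lemma discrete_subgroup_nbhs_uniq (c : G) :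
  exists2 N : set G, nbhs c N &
    forall x z, N x -> N z -> Gamma x -> Gamma z -> x = z.
Proof.
have [G1 [GM GI]] := Gamma_subgroup.
have [U [oU U1 UGamma]] := Gamma_discrete G1.
have quot_cvg : (fun p : G * G => p.1^-1 * p.2) @ nbhs (c, c) --> 1.
  rewrite -(mulVg c).
  by apply: cvgM_group; [apply: cvgV_group; exact: cvg_fst | exact: cvg_snd].
have /quot_cvg [[A B] /= [nA nB] sAB] : nbhs (1 : G) U by exact: open_nbhs_nbhs.
exists (A `&` B); first exact: filterI.
move=> x z [Ax _] [_ Bz] Gx Gz.
have : (U `&` Gamma) (x^-1 * z).
  by split; [exact: (sAB (x, z)) | apply: GM => //; exact: GI].
by rewrite UGamma => /= xz1; rewrite -(mulVKg x z) xz1 mulg1.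
Qed.

Lemma discrete_subgroup_near_notin (S : set G) (c : G) :
  hausdorff_space G -> S `<=` Gamma -> ~ S c -> \forall z \near c, ~ S z.
Proof.
move=> hG SGamma nSc; have [N nN Nuniq] := discrete_subgroup_nbhs_uniq c.
have [[g0 [Ng0 Sg0]] | noS] := pselect (exists g0, N g0 /\ S g0); last first.
  by apply: filterS nN => z Nz Sz; apply: noS; exists z.
have g0_neq_c : c != g0 by apply/eqP => cg0; apply: nSc; rewrite cg0.
have [A [oA /set_mem Ac /set_mem nAg0]] := hausdorff_accessible hG g0_neq_c.
apply: filterS (filterI nN (open_nbhs_nbhs (conj oA Ac))) => z [Nz Az] Sz.
by apply: nAg0; rewrite (Nuniq g0 z) //; exact: SGamma.
Qed.

End DiscreteSubgroup.

Lemma quotient_not_self_intersecting (F Gamma D D' : set G) (a b : G) :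
  D' `<=` D `\` self_intersection_points F Gamma D -> D' a -> D' b ->
  ~ (Gamma `\` Gamma_F F Gamma) (a^-1 * b).
Proof.
move=> sD' /sD' [Da nYa] /sD' [Db _] bad; apply: nYa; split => //.
by exists (a^-1 * b) => //; rewrite mulVKg.
Qed.

End TopologicalGroup.

Theorem proposition5p9 (G : topGroupType)
  (G_hausdorff : hausdorff_space G) (G_lc : locally_compact [set: G])
  (Gamma : set G) (Gamma_subgroup : is_subgroup Gamma)
  (Gamma_discrete : discrete_subset Gamma)
  (F : set G) (F_subgroup : is_subgroup F) (F_closed : closed F)
  (D : set G) (D_compact : compact D) :
  forall D' : set G, compact D' ->
    D' `<=` D `\` self_intersection_points F Gamma D ->
    exists Omega : set G,
      [/\ open Omega, D' `<=` Omega &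
        forall g gamma, Omega g -> (Gamma `\` Gamma_F F Gamma) gamma ->
          ~ Omega (g * gamma)].
Proof.
move=> D' cD' sD'; set Bad := Gamma `\` Gamma_F F Gamma.
have /compact_near_coveringP cover := compact_setX cD' cD'.
have [[A B] /= [nA nB] good] :
    \forall w \near ((1, 1) : G * G),
      D' `*` D' `<=` [set ab | ~ Bad (conj_quotient (ab, w))].
  apply: (cover _ (nbhs ((1, 1) : G * G))) => -[a b] [Da Db].
  have : \forall z \near a^-1 * b, ~ Bad z.
    apply: (discrete_subgroup_near_notin Gamma_subgroup Gamma_discrete) => //.
      by move=> ? [].
    exact: (quotient_not_self_intersecting sD').
  by rewrite -conj_quotient_id => /conj_quotient_continuous.
set W := (A `&` B)°.
exists [set x | exists2 a, D' a & W (a^-1 * x)]; split.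
- rewrite openE => x [a Da Wx].
  have /nbhs_lmul nW : nbhs (a^-1 * x) W.
    by apply: open_nbhs_nbhs; split; first exact: open_interior.
  by apply: filterS nW => y Wy; exists a.
- by move=> x D'x; exists x; rewrite // mulVg; exact: filterI.
move=> g gamma [a Da /interior_subset [Ag _]] bad
  [b Db /interior_subset [_ Bg]].
apply: (good (a^-1 * g, b^-1 * (g * gamma)) (conj Ag Bg) (a, b) (conj Da Db)).
by rewrite /conj_quotient /= invgM invgK mulgK (mulVKg b) mulKg.
Qed.
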